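(* Let $D$ be an integral domain, $S$ a multiplicative subset of $D$, and $M$ a torsion-free $D$-module which is a $w$-module. Let $w$ denote the $w$-operation on $D$-modules and $\overline{w}$ the $w$-operation on $D_S$-modules. Let $L$ be a nonzero $D$-submodule of $M$. Then: (1) If $L$ is a $w$-submodule of $M$, then $L_S\cap M$ is a $w$-submodule of $M$. (2) If $L_S$ is a $\overline{w}$-submodule of $M_S$, then $L_S\cap M$ is a $w$-submodule of $M$. (3) $(L_w)_S\subseteq (L_S)_{\overline{w}}$ and $((L_w)_S)_{\overline{w}}=(L_S)_{\overline{w}}$.
   Context: Let $K$ be the quotient field of $D$. For a nonzero fractional ideal $I$, $I^{-1}=\{a\in K\mid aI\subseteq D\}$, $I_v=(I^{-1})^{-1}$. $J\in\mathrm{GV}(D)$ means $J$ is a finitely generated ideal of $D$ with $J_v=D$. For a torsion-free $D$-module $N$, $N_w=\{x\in N\otimes_D K\mid xJ\subseteq N\text{ for some }J\in\mathrm{GV}(D)\}$; $N$ is a $w$-module if $N_w=N$; a submodule $L$ of $M$ is a $w$-submodule if $L_w=L$. The $\overline{w}$-operation is defined analogously over the domain $D_S$ using $\mathrm{GV}(D_S)$. $M$ is identified with its image in $M_S$, and $L_S\cap M$ is taken inside $M_S$. *)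

From mathcomp Require Import all_boot all_algebra.
Set Implicit Arguments. Unset Strict Implicit. Unset Printing Implicit Defensive.
Import GRing.Theory.
Local Open Scope ring_scope.

Section Defs.
Variable K : fieldType.
Variable V : lmodType K.

Definition subring (R : K -> Prop) : Prop :=
  R 0 /\ R 1 /\ (forall x y, R x -> R y -> R (x - y)) /\
  (forall x y, R x -> R y -> R (x * y)).

Definition quotient_field_of (R : K -> Prop) : Prop :=
  forall x : K, exists a b, R a /\ R b /\ b != 0 /\ x = a / b.

Definition mult_subset (D S : K -> Prop) : Prop :=
  (forall s, S s -> D s) /\ S 1 /\ ~ S 0 /\
  (forall s t, S s -> S t -> S (s * t)).

Definition submodule (R : K -> Prop) (N : V -> Prop) : Prop :=
  N 0 /\ (forall x y, N x -> N y -> N (x + y)) /\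
  (forall r x, R r -> N x -> N (r *: x)).

Definition frac_inv (R I : K -> Prop) : K -> Prop :=
  fun a => forall x, I x -> R (a * x).

Definition vclos (R I : K -> Prop) : K -> Prop := frac_inv R (frac_inv R I).

Definition fg_ideal (R J : K -> Prop) : Prop :=
  exists s : seq K, (forall i : 'I_(size s), R s`_i) /\
    forall x, J x <-> exists c : 'I_(size s) -> K,
       (forall i, R (c i)) /\ x = \sum_(i < size s) c i * s`_i.

Definition GV (R J : K -> Prop) : Prop :=
  fg_ideal R J /\ (exists j, J j /\ j != 0) /\ (forall x, vclos R J x <-> R x).

(* N ⊗_R K, realised inside V as {d^{-1} n | d in R \ 0, n in N} *)
Definition tensorK (R : K -> Prop) (N : V -> Prop) : V -> Prop :=
  fun x => exists d n, R d /\ d != 0 /\ N n /\ x = d^-1 *: n.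

Definition wcl (R : K -> Prop) (N : V -> Prop) : V -> Prop :=
  fun x => tensorK R N x /\ exists J, GV R J /\ forall j, J j -> N (j *: x).

Definition is_w (R : K -> Prop) (N : V -> Prop) : Prop :=
  forall x, wcl R N x <-> N x.

Definition locR (D S : K -> Prop) : K -> Prop :=
  fun a => exists d s, D d /\ S s /\ a = d / s.

Definition locM (S : K -> Prop) (N : V -> Prop) : V -> Prop :=
  fun v => exists n s, N n /\ S s /\ v = s^-1 *: n.

End Defs.

(* Two facts about GV-ideals carry the argument.  First, the product of two
   GV-ideals contains a GV-ideal, so finitely many conditions "J y ⊆ N" can be
   met by a single J; this makes the w-closure idempotent.  Second, if J ∈ GV(D)
   has generators g then the D_S-ideal generated by g lies in GV(D_S): when
   u g ⊆ D_S, one s ∈ S clears the finitely many denominators, so s u J ⊆ D and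
   s u ∈ D.  Hence N_w lies in the w-closure over D_S of any D_S-submodule
   containing N, which gives (2), the inclusion in (3) and, by idempotence, the
   equality in (3).  For (1), if J x ⊆ L_S then again one s ∈ S works for all
   generators of J, so s x ∈ L_w = L and x ∈ L_S. *)

From mathcomp Require Import all_boot all_algebra.
From mathcomp Require Import ring.
Import GRing.Theory.
Local Open Scope ring_scope.
Set Implicit Arguments.
Unset Strict Implicit.

Section Subring.
Variables (K : fieldType) (R : K -> Prop).
Hypothesis HR : subring R.

Lemma subring0 : R 0. Proof. by case: HR. Qed.
Lemma subring1 : R 1. Proof. by case: HR => _ []. Qed.
Lemma subringB x y : R x -> R y -> R (x - y).
Proof. by move: HR => [_ [_ [RB _]]]; apply: RB. Qed.
Lemma subringM x y : R x -> R y -> R (x * y).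
Proof. by move: HR => [_ [_ [_ RM]]]; apply: RM. Qed.

Lemma subringD x y : R x -> R y -> R (x + y).
Proof.
move=> Rx Ry; rewrite -[y]opprK; apply: subringB => //.
by rewrite -sub0r; apply: subringB => //; apply: subring0.
Qed.

End Subring.

Section Submodule.
Variables (K : fieldType) (V : lmodType K) (R : K -> Prop) (N : V -> Prop).
Hypothesis HN : submodule R N.

Lemma submodule0 : N 0. Proof. by case: HN. Qed.
Lemma submoduleD x y : N x -> N y -> N (x + y).
Proof. by move: HN => [_ [ND _]]; apply: ND. Qed.
Lemma submoduleZ r x : R r -> N x -> N (r *: x).
Proof. by move: HN => [_ [_ NZ]]; apply: NZ. Qed.

End Submodule.

Lemma submoduleI (K : fieldType) (V : lmodType K) (R : K -> Prop) (N N' : V -> Prop) :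
  submodule R N -> submodule R N' -> submodule R (fun x => N x /\ N' x).
Proof.
move=> HN HN'; split; first by split; [apply: (submodule0 HN) | apply: (submodule0 HN')].
split=> [x y [Nx N'x] [Ny N'y] | r x Rr [Nx N'x]].
  by split; [apply: (submoduleD HN) | apply: (submoduleD HN')].
by split; [apply: (submoduleZ HN) | apply: (submoduleZ HN')].
Qed.

Lemma submodule_restrict (K : fieldType) (V : lmodType K) (R R0 : K -> Prop)
    (N : V -> Prop) :
  (forall r, R0 r -> R r) -> submodule R N -> submodule R0 N.
Proof.
move=> R0R HN; split; first exact: submodule0 HN.
by split=> [|r x /R0R]; [apply: (submoduleD HN) | apply: (submoduleZ HN)].
Qed.

Section Span.
Variables (K : fieldType) (R : K -> Prop).

Definition span (g : seq K) : K -> Prop :=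
  fun x => exists c : 'I_(size g) -> K,
    (forall i, R (c i)) /\ x = \sum_(i < size g) c i * g`_i.

Definition gens_in (g : seq K) : Prop := forall a, a \in g -> R a.

Lemma span_ind g (P : K -> Prop) j :
  P 0 -> (forall a b, P a -> P b -> P (a + b)) ->
  (forall r a, R r -> a \in g -> P (r * a)) -> span g j -> P j.
Proof.
move=> P0 PD Pg [c [Rc ->]]; apply: (big_ind P) => // i _.
by apply: Pg => //; apply: mem_nth.
Qed.

Lemma span_scale (V : lmodType K) (N : V -> Prop) g y j :
  submodule R N -> (forall a, a \in g -> N (a *: y)) -> span g j -> N (j *: y).
Proof.
move=> HN Ng; apply: (@span_ind g (fun j => N (j *: y))).
- by rewrite scale0r; apply: submodule0 HN.
- by move=> a b Na Nb; rewrite scalerDl; apply: (submoduleD HN).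
- by move=> r a Rr ga; rewrite -scalerA; apply: (submoduleZ HN) => //; apply: Ng.
Qed.

Hypothesis HR : subring R.

Lemma span_gen g a : a \in g -> span g a.
Proof.
move=> ga; pose i := Ordinal (etrans (index_mem a g) ga).
exists (fun j => (j == i)%:R); split.
  by move=> j; case: (j == i); [apply: subring1 | apply: subring0].
rewrite (bigD1 i) //= eqxx mul1r big1 ?addr0 ?nth_index // => j /negbTE ->.
by rewrite mul0r.
Qed.

Lemma span0 g : span g 0.
Proof.
exists (fun _ => 0); split=> [_|]; first exact: subring0.
by rewrite big1 // => i _; rewrite mul0r.
Qed.

Lemma spanD g a b : span g a -> span g b -> span g (a + b).
Proof.
move=> [c [Rc ->]] [c' [Rc' ->]]; exists (fun i => c i + c' i); split.
  by move=> i; apply: subringD.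
by rewrite -big_split /=; apply: eq_bigr => i _; rewrite mulrDl.
Qed.

Lemma spanM g r a : R r -> span g a -> span g (r * a).
Proof.
move=> Rr [c [Rc ->]]; exists (fun i => r * c i); split.
  by move=> i; apply: subringM.
by rewrite mulr_sumr; apply: eq_bigr => i _; rewrite mulrA.
Qed.

Lemma span_mulr g u j :
  (forall a, a \in g -> R (u * a)) -> span g j -> R (u * j).
Proof.
move=> Rug; apply: (@span_ind g (fun j => R (u * j))).
- by rewrite mulr0; apply: subring0.
- by move=> a b Ra Rb; rewrite mulrDr; apply: subringD.
- by move=> r a Rr ga; rewrite mulrCA; apply: subringM => //; apply: Rug.
Qed.

Lemma span_subring g j : gens_in g -> span g j -> R j.
Proof. by move=> Rg gj; rewrite -[j]mul1r; apply: span_mulr gj => a; rewrite mul1r; apply: Rg. Qed.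

Lemma span_allpairs g1 g2 j1 j2 :
  span g1 j1 -> span g2 j2 -> span [seq x * y | x <- g1, y <- g2] (j1 * j2).
Proof.
set g := [seq x * y | x <- g1, y <- g2] => + Hj2.
apply: (@span_ind g1 (fun j => span g (j * j2))).
- by rewrite mul0r; apply: span0.
- by move=> a b Ha Hb; rewrite mulrDl; apply: spanD.
move=> r a Rr ga; rewrite -mulrA; apply: spanM => //.
move: Hj2; apply: (@span_ind g2 (fun j => span g (a * j))).
- by rewrite mulr0; apply: span0.
- by move=> b c Hb Hc; rewrite mulrDr; apply: spanD.
by move=> r' b Rr' gb; rewrite mulrCA; apply: spanM => //; apply/span_gen/allpairs_f.
Qed.

End Span.

Section GV.
Variables (K : fieldType) (R : K -> Prop).
Hypothesis HR : subring R.

Lemma GV_span J : GV R J ->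
  exists g, gens_in R g /\ (forall x, J x <-> span R g x).
Proof.
move=> [[g [Rg Jg]] _]; exists g; split=> // a ga.
by rewrite -(nth_index 0 ga); apply: (Rg (Ordinal _)); rewrite index_mem.
Qed.

Lemma GV_subring J j : GV R J -> J j -> R j.
Proof.
move=> GVJ Jj; have [g [Rg Jg]] := GV_span GVJ.
exact: (span_subring HR Rg (proj1 (Jg j) Jj)).
Qed.

Lemma GV_cancel J u : GV R J -> (forall j, J j -> R (u * j)) -> R u.
Proof.
move=> [_ [_ Jv]] Ru; have := proj2 (Jv 1) (subring1 HR) u Ru.
by rewrite mul1r.
Qed.

Lemma GV_nonzero_gen J g :
  GV R J -> (forall x, J x <-> span R g x) -> exists2 a, a \in g & a != 0.
Proof.
move=> [_ [[j [Jj j_neq0]] _]] Jg.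
have [/hasP [a ga a_neq0] | /hasPn g_eq0] := boolP (has (fun a => a != 0) g).
  by exists a.
suff j_eq0 : j = 0 by rewrite j_eq0 eqxx in j_neq0.
apply: (@span_ind _ _ g (fun j => j = 0)) (proj1 (Jg j) Jj) => //.
- by move=> a b -> ->; rewrite addr0.
- by move=> r a _ /g_eq0; rewrite negbK => /eqP ->; rewrite mulr0.
Qed.

Lemma span_GV g :
  gens_in R g -> (exists a, span R g a /\ a != 0) ->
  (forall u, (forall j, span R g j -> R (u * j)) -> R u) -> GV R (span R g).
Proof.
move=> Rg g_neq0 g_cancel; split; last split => //.
  by exists g; split=> // i; apply/Rg/mem_nth.
move=> x; split=> [xv | Rx u Ru].
  rewrite -[x]mulr1; apply: xv => j gj; rewrite mul1r.
  exact: (span_subring HR Rg gj).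
by apply: subringM => //; apply: g_cancel.
Qed.

Lemma GV_one : GV R (span R [:: 1]).
Proof.
have g1 : span R [:: 1] 1 by apply: (span_gen HR); rewrite inE.
apply: span_GV.
- by move=> a; rewrite inE => /eqP ->; apply: subring1.
- by exists 1; split; last exact: oner_neq0.
- by move=> u /(_ 1 g1); rewrite mulr1.
Qed.

Lemma GV_mul J1 J2 : GV R J1 -> GV R J2 ->
  exists g, GV R (span R g) /\
    (forall a, a \in g -> exists j1 j2, [/\ J1 j1, J2 j2 & a = j1 * j2]).
Proof.
move=> GV1 GV2.
have [g1 [Rg1 Jg1]] := GV_span GV1; have [g2 [Rg2 Jg2]] := GV_span GV2.
exists [seq x * y | x <- g1, y <- g2]; split; last first.
  move=> _ /allpairsP [[x y] [/= g1x g2y ->]].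
  by exists x, y; split=> //; [apply/Jg1/(span_gen HR) | apply/Jg2/(span_gen HR)].
apply: span_GV.
- move=> _ /allpairsP [[x y] [/= g1x g2y ->]].
  by apply: (subringM HR); [apply: Rg1 | apply: Rg2].
- case: GV1 => [_ [[j1 [J1j1 j1_neq0]] _]]; case: GV2 => [_ [[j2 [J2j2 j2_neq0]] _]].
  exists (j1 * j2); split; last exact: mulf_neq0.
  by apply: (span_allpairs HR); [apply/Jg1 | apply/Jg2].
- move=> u Ru; apply: (GV_cancel GV1) => j1 J1j1.
  apply: (GV_cancel GV2) => j2 J2j2; rewrite -mulrA; apply: Ru.
  by apply: (span_allpairs HR); [apply/Jg1 | apply/Jg2].
Qed.

End GV.

Section Localization.
Variables (K : fieldType) (D S : K -> Prop).
Hypothesis HS : mult_subset D S.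

Lemma mult_subset_sub s : S s -> D s. Proof. by case: HS => SD _; apply: SD. Qed.
Lemma mult_subset1 : S 1. Proof. by case: HS => _ []. Qed.
Lemma mult_subsetM s t : S s -> S t -> S (s * t).
Proof. by move: HS => [_ [_ [_ SM]]]; apply: SM. Qed.

Lemma mult_subset_neq0 s : S s -> s != 0.
Proof. by move: HS => [_ [_ [S0 _]]] Ss; apply: contraPneq S0 => <-. Qed.

Lemma mult_subset_common (P : K -> K -> Prop) (g : seq K) :
  (forall s t a, S t -> P s a -> P (t * s) a) ->
  (forall a, a \in g -> exists2 s, S s & P s a) ->
  exists2 s, S s & forall a, a \in g -> P s a.
Proof.
move=> P_mul; elim: g => [|b g IH] Pg; first by exists 1 => //; apply: mult_subset1.
have [s Ss Psb] := Pg b (mem_head b g).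
have [t St Ptg] : exists2 t, S t & forall a, a \in g -> P t a.
  by apply: IH => a ga; apply: Pg; rewrite in_cons ga orbT.
exists (s * t); first exact: mult_subsetM.
move=> a; rewrite in_cons => /orP [/eqP -> | ga]; last exact: P_mul (Ptg a ga).
by rewrite mulrC; apply: P_mul.
Qed.

Lemma sub_locR d : D d -> locR D S d.
Proof. by move=> Dd; exists d, 1; split; [|split; [apply: mult_subset1 | rewrite divr1]]. Qed.

Hypothesis HD : subring D.

Lemma locR_inv s : S s -> locR D S s^-1.
Proof. by move=> Ss; exists 1, s; split; [apply: subring1 | rewrite div1r]. Qed.

Lemma locR_subring : subring (locR D S).
Proof.
split; first exact: (sub_locR (subring0 HD)).
split; first exact: (sub_locR (subring1 HD)).
split=> _ _ [d [s [Dd [Ss ->]]]] [d' [s' [Dd' [Ss' ->]]]];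
  have s_neq0 := mult_subset_neq0 Ss; have s'_neq0 := mult_subset_neq0 Ss'.
  exists (d * s' - d' * s), (s * s'); split; last split; last by field; apply/andP.
  - by apply: (subringB HD); apply: (subringM HD) => //; apply: mult_subset_sub.
  - exact: mult_subsetM.
exists (d * d'), (s * s'); split; last split; last by field; apply/andP.
- exact: (subringM HD).
- exact: mult_subsetM.
Qed.

Lemma GV_locR J : GV D J ->
  exists g, (forall x, J x <-> span D g x) /\ GV (locR D S) (span (locR D S) g).
Proof.
move=> GVJ; have [g [Dg Jg]] := GV_span GVJ.
have HDS := locR_subring.
exists g; split=> //; apply: span_GV => //.
- by move=> a /Dg; apply: sub_locR.
- have [a ga a_neq0] := GV_nonzero_gen GVJ Jg.
  by exists a; split=> //; apply: span_gen.
move=> u Ru.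
have [s Ss Dsug] : exists2 s, S s & forall a, a \in g -> D (s * (u * a)).
  apply: mult_subset_common => [s t a St Dsa | a ga].
    by rewrite -mulrA; apply: (subringM HD) => //; apply: mult_subset_sub.
  have [d [s [Dd [Ss ->]]]] := Ru a (span_gen HDS ga).
  by exists s => //; rewrite mulrC divfK // mult_subset_neq0.
have Dsu : D (s * u).
  apply: (GV_cancel HD GVJ) => j /Jg; apply: (span_mulr HD) => a ga.
  by rewrite -mulrA; apply: Dsug.
exists (s * u), s; split=> //; split=> //.
by rewrite mulrC mulKf // mult_subset_neq0.
Qed.

Variable V : lmodType K.

Lemma locMP (N : V -> Prop) v : locM S N v <-> exists2 s, S s & N (s *: v).
Proof.
split=> [[n [s [Nn [Ss ->]]]] | [s Ss Nsv]].
  by exists s => //; rewrite scalerA mulfV ?scale1r // mult_subset_neq0.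
exists (s *: v), s; split=> //; split=> //.
by rewrite scalerA mulVf ?scale1r // mult_subset_neq0.
Qed.

Lemma sub_locM (N : V -> Prop) v : N v -> locM S N v.
Proof.
by move=> Nv; exists v, 1; split=> //; split; [apply: mult_subset1 | rewrite invr1 scale1r].
Qed.

Lemma locM_subset (N1 N2 : V -> Prop) v :
  (forall x, N1 x -> N2 x) -> locM S N1 v -> locM S N2 v.
Proof. by move=> N12 [n [s [N1n [Ss ->]]]]; exists n, s; split; first exact: N12. Qed.

Lemma locM_submodule (N : V -> Prop) :
  submodule D N -> submodule (locR D S) (locM S N).
Proof.
move=> HN; split; first exact: sub_locM (submodule0 HN).
split.
  move=> _ _ [n [s [Nn [Ss ->]]]] [m [t [Nm [St ->]]]].
  have s_neq0 := mult_subset_neq0 Ss; have t_neq0 := mult_subset_neq0 St.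
  exists (t *: n + s *: m), (s * t); split; last split.
  - by apply: (submoduleD HN); apply: (submoduleZ HN) => //; apply: mult_subset_sub.
  - exact: mult_subsetM.
  - by rewrite scalerDr !scalerA; congr (_ *: _ + _ *: _); field; apply/andP.
move=> _ _ [d [s [Dd [Ss ->]]]] [n [t [Nn [St ->]]]].
have s_neq0 := mult_subset_neq0 Ss; have t_neq0 := mult_subset_neq0 St.
exists (d *: n), (s * t); split; last split.
- exact: (submoduleZ HN).
- exact: mult_subsetM.
- by rewrite !scalerA; congr (_ *: _); field; apply/andP.
Qed.

End Localization.

Section WClosure.
Variables (K : fieldType) (V : lmodType K) (R : K -> Prop).
Hypothesis HR : subring R.

Lemma tensorK_subset (N1 N2 : V -> Prop) x :
  (forall y, N1 y -> N2 y) -> tensorK R N1 x -> tensorK R N2 x.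
Proof.
move=> N12 [d [n [Rd [d_neq0 [N1n ->]]]]]; exists d, n.
by do 2!split=> //; split; first exact: N12.
Qed.

Lemma wcl_subset (N1 N2 : V -> Prop) x :
  (forall y, N1 y -> N2 y) -> wcl R N1 x -> wcl R N2 x.
Proof.
move=> N12 [Tx [J [GVJ JN1]]]; split; first exact: tensorK_subset Tx.
by exists J; split=> // j /JN1; apply: N12.
Qed.

Lemma subset_wcl (N : V -> Prop) x : submodule R N -> N x -> wcl R N x.
Proof.
move=> HN Nx; split.
  exists 1, x; split; first exact: subring1.
  by split; [exact: oner_neq0 | rewrite invr1 scale1r].
exists (span R [:: 1]); split; first exact: GV_one.
by move=> j; apply: (span_scale HN) => a; rewrite inE => /eqP ->; rewrite scale1r.
Qed.

Lemma tensorKZ (N : V -> Prop) r x :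
  submodule R N -> R r -> tensorK R N x -> tensorK R N (r *: x).
Proof.
move=> HN Rr [d [n [Rd [d_neq0 [Nn ->]]]]]; exists d, (r *: n).
split=> //; split=> //; split; first exact: (submoduleZ HN).
by rewrite !scalerA mulrC.
Qed.

Lemma wclZ (N : V -> Prop) r x :
  submodule R N -> R r -> wcl R N x -> wcl R N (r *: x).
Proof.
move=> HN Rr [Tx [J [GVJ JN]]]; split; first exact: tensorKZ.
exists J; split=> // j Jj; rewrite scalerA mulrC -scalerA.
by apply: (submoduleZ HN) => //; apply: JN.
Qed.

Lemma tensorK_idem (N : V -> Prop) x : tensorK R (tensorK R N) x -> tensorK R N x.
Proof.
move=> [d [_ [Rd [d_neq0 [[e [n [Re [e_neq0 [Nn ->]]]]] ->]]]]].
exists (d * e), n; split; first exact: subringM.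
by split; [exact: mulf_neq0 | split=> //; rewrite scalerA invfM].
Qed.

Lemma wcl_GV_common (N : V -> Prop) (ys : seq V) :
  submodule R N ->
  (forall y, y \in ys -> exists J, GV R J /\ forall j, J j -> N (j *: y)) ->
  exists J, GV R J /\ forall y, y \in ys -> forall j, J j -> N (j *: y).
Proof.
move=> HN; elim: ys => [|y ys IH] Jys.
  by exists (span R [:: 1]); split=> //; apply: GV_one.
have [J1 [GVJ1 J1N]] := Jys y (mem_head y ys).
have [J2 [GVJ2 J2N]] : exists J, GV R J /\ forall z, z \in ys -> forall j, J j -> N (j *: z).
  by apply: IH => z zys; apply: Jys; rewrite in_cons zys orbT.
have [g [GVg gJ12]] := GV_mul HR GVJ1 GVJ2.
exists (span R g); split=> // z; rewrite in_cons => /orP zys j.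
apply: (span_scale HN) => a ga.
have [j1 [j2 [J1j1 J2j2 ->]]] := gJ12 a ga.
case: zys => [/eqP -> | zys].
  by rewrite mulrC -scalerA; apply: (submoduleZ HN); [apply: (GV_subring HR GVJ2) | apply: J1N].
by rewrite -scalerA; apply: (submoduleZ HN); [apply: (GV_subring HR GVJ1) | apply: J2N].
Qed.

Lemma wcl_idem (N : V -> Prop) x : submodule R N -> wcl R (wcl R N) x -> wcl R N x.
Proof.
move=> HN [Tx [J [GVJ JwN]]]; split.
  by apply: tensorK_idem; apply: tensorK_subset Tx => y [].
have [g [_ Jg]] := GV_span GVJ.
have [J' [GVJ' J'N]] : exists J', GV R J' /\
    forall y, y \in [seq a *: x | a <- g] -> forall j, J' j -> N (j *: y).
  apply: (wcl_GV_common HN) => _ /mapP [a ga ->].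
  by have [_] := JwN a (proj2 (Jg a) (span_gen HR ga)).
have [h [GVh hJ]] := GV_mul HR GVJ' GVJ.
exists (span R h); split=> // k; apply: (span_scale HN) => _ /hJ [j' [j [J'j' Jj ->]]].
rewrite mulrC -scalerA; apply: (span_scale HN) (proj1 (Jg j) Jj) => a ga.
by rewrite !scalerA mulrC -scalerA; apply: J'N => //; apply: map_f.
Qed.

Lemma is_w_meet (N M : V -> Prop) :
  submodule R N -> submodule R M -> is_w R M ->
  (forall x, wcl R (fun y => N y /\ M y) x -> N x) -> is_w R (fun y => N y /\ M y).
Proof.
move=> HN HM wM wN x; split=> [wNMx | NMx]; last exact: subset_wcl (submoduleI HN HM) NMx.
by split; [exact: wN | apply/wM; apply: wcl_subset wNMx => y []].
Qed.

End WClosure.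

Section LocalizationWClosure.
Variables (K : fieldType) (V : lmodType K) (D S : K -> Prop).
Hypotheses (HD : subring D) (HS : mult_subset D S).

Lemma wcl_locR (N P : V -> Prop) x :
  submodule (locR D S) P -> (forall y, N y -> P y) -> wcl D N x -> wcl (locR D S) P x.
Proof.
move=> HP NP [[d [n [Dd [d_neq0 [Nn ->]]]]] [J [GVJ JN]]]; split.
  by exists d, n; split; [exact: sub_locR | split=> //; split; first exact: NP].
have [g [Jg GVg]] := GV_locR HS HD GVJ.
exists (span (locR D S) g); split=> // j; apply: (span_scale HP) => a ga.
by apply/NP/JN/Jg; apply: span_gen ga.
Qed.

Lemma locM_wcl (L : V -> Prop) :
  submodule D L -> forall x, locM S (wcl D L) x -> wcl (locR D S) (locM S L) x.
Proof.
move=> HL _ [y [s [wLy [Ss ->]]]]; have HLS := locM_submodule HS HL.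
apply: (wclZ HLS (locR_inv HD Ss)).
exact: (wcl_locR HLS (fun z Lz => sub_locM HS Lz) wLy).
Qed.

Lemma tensorK_locM (L : V -> Prop) x : tensorK D (locM S L) x -> tensorK D L x.
Proof.
move=> [d [_ [Dd [d_neq0 [[l [t [Ll [St ->]]]] ->]]]]].
exists (d * t), l; split; first exact: (subringM HD Dd (mult_subset_sub HS St)).
split; first by rewrite mulf_neq0 // (mult_subset_neq0 HS).
by split=> //; rewrite scalerA invfM.
Qed.

Lemma is_w_locM (L : V -> Prop) : submodule D L -> is_w D L -> is_w D (locM S L).
Proof.
move=> HL wL x; split=> [[Tx [J [GVJ JLS]]] | LSx]; last first.
  exact: (subset_wcl HD (submodule_restrict (sub_locR HS) (locM_submodule HS HL)) LSx).
have [g [_ Jg]] := GV_span GVJ.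
have [s Ss sgL] : exists2 s, S s & forall a, a \in g -> L (s *: (a *: x)).
  apply: (mult_subset_common HS) => [s t a St Lsa | a ga].
    by rewrite -scalerA; apply: (submoduleZ HL) => //; apply: (mult_subset_sub HS).
  by apply/(locMP HS)/JLS/Jg; apply: span_gen ga.
apply/(locMP HS); exists s => //; apply/wL; split.
  exact: tensorKZ HL (mult_subset_sub HS Ss) (tensorK_locM Tx).
exists J; split=> // j /Jg; apply: (span_scale HL) => a ga.
by rewrite scalerA mulrC -scalerA; apply: sgL.
Qed.

End LocalizationWClosure.

Unset Implicit Arguments.

Theorem lemma3p2 (K : fieldType) (V : lmodType K) (D S : K -> Prop)
    (M L : V -> Prop) :
  subring D -> quotient_field_of D -> mult_subset D S ->
  submodule D M -> is_w D M ->
  submodule D L -> (forall x, L x -> M x) -> (exists x, L x /\ x != 0) ->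
  (is_w D L -> is_w D (fun x => locM S L x /\ M x)) /\
  (is_w (locR D S) (locM S L) -> is_w D (fun x => locM S L x /\ M x)) /\
  ((forall x, locM S (wcl D L) x -> wcl (locR D S) (locM S L) x) /\
   (forall x, wcl (locR D S) (locM S (wcl D L)) x <->
              wcl (locR D S) (locM S L) x)).
Proof.
(* N ⊗_D K is modelled inside V by tensorK. *)
move=> HD _ HS HM wM HL _ _.
have HDS := locR_subring HS HD.
have HLS := locM_submodule HS HL.
have HLS_D : submodule D (locM S L) := submodule_restrict (sub_locR HS) HLS.
have LM_LS : forall y, locM S L y /\ M y -> locM S L y by move=> y [].
have wcl_locM := locM_wcl HD HS HL.
split; [|split; [|split=> //]].
- move=> wL; apply: (is_w_meet HD HLS_D HM wM) => x /(wcl_subset LM_LS).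
  exact: (proj1 (is_w_locM HD HS HL wL x)).
- move=> wLS; apply: (is_w_meet HD HLS_D HM wM) => x wx; apply/wLS.
  exact: (wcl_locR HD HS HLS LM_LS wx).
move=> x; split=> [/(wcl_subset wcl_locM) | ]; first exact: (wcl_idem HDS HLS).
apply: wcl_subset => y; apply: locM_subset => z; exact: (subset_wcl HD HL).
Qed.
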